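(* $\mathfrak{L}(BS(1,2)) \not\subseteq \mathsf{CF}$; that is, some language recognized by a $BS(1,2)$-automaton is not context-free.
   Context: For a group $G$ with identity $e$, a $G$-automaton is a tuple $(Q,\Sigma,G,\delta,q_0,Q_a)$ where $Q$ is a finite set of states, $\Sigma$ a finite input alphabet, $q_0\in Q$ the initial state, $Q_a\subseteq Q$ the accepting states, and $\delta$ assigns to each $(q,\sigma)\in Q\times(\Sigma\cup\{\varepsilon\})$ a finite set of pairs $(q',m)\in Q\times G$. The register holds an element of $G$, initially $e$; using a transition $(q',m)\in\delta(q,\sigma)$ the automaton reads $\sigma$ (or nothing), moves to $q'$ and replaces the register content $x$ by $xm$. A word is accepted if some computation reads it entirely and ends in an accepting state with register equal to $e$. $\mathfrak{L}(G)$ is the class of languages recognized by $G$-automata. $BS(1,2)$ is the Baumslag–Solitar group $\langle a,b\mid bab^{-1}=a^2\rangle$. $\mathsf{CF}$ is the class of context-free languages. *)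

From mathcomp Require Import all_boot all_order all_algebra.
From Stdlib Require List.
Set Implicit Arguments.
Unset Strict Implicit.
Unset Printing Implicit Defensive.
Import Order.TTheory GRing.Theory Num.Theory.
Local Open Scope ring_scope.

(* BS(1,2) = <a,b | b a b^-1 = a^2> is realised (faithfully) as the group of
   affine maps t |-> 2^k t + r of Q with k : int and r a dyadic rational
   (a = t |-> t+1, b = t |-> 2t).  An element is the pair (k, r); the product
   is composition (x * y)(t) = x (y t). We use the ambient group Z |x Q on
   int * rat and single out BS(1,2) as the subgroup of pairs with dyadic r. *)

Definition dyadic (r : rat) : Prop :=
  exists (n : int) (e : nat), r = n%:~R / (2%:R ^+ e).

Definition in_BS12 (g : int * rat) : Prop := dyadic g.2.

Definition aff_mul (x y : int * rat) : int * rat :=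
  (x.1 + y.1, x.2 + (2%:R : rat) ^ x.1 * y.2).

Definition aff_one : int * rat := (0, 0).

Definition BS_a : int * rat := (0, 1).
Definition BS_b : int * rat := (1, 0).

Lemma BS_relation : aff_mul (aff_mul BS_b BS_a) (-1, 0) = aff_mul BS_a BS_a.
Proof.
rewrite /aff_mul /BS_a /BS_b /=.
congr pair.

Qed.

(* delta q s (s = None for epsilon) is the finite list of pairs (q', m). *)
Record GAut (G : Type) (Sigma : finType) := {
  gstate : finType;
  ginit : gstate;
  gacc : pred gstate;
  gdelta : gstate -> option Sigma -> seq (gstate * G)
}.

Section Runs.
Variables (G : Type) (mul : G -> G -> G) (e : G) (Sigma : finType).
Variable A : GAut G Sigma.

Inductive runs : gstate A -> G -> seq Sigma -> gstate A -> G -> Prop :=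
| runs_nil q x : runs q x [::] q x
| runs_eps q x w q1 m q' y :
    List.In (q1, m) (@gdelta _ _ A q None) ->
    runs q1 (mul x m) w q' y -> runs q x w q' y
| runs_sym q x a w q1 m q' y :
    List.In (q1, m) (@gdelta _ _ A q (Some a)) ->
    runs q1 (mul x m) w q' y -> runs q x (a :: w) q' y.

Definition gaccepts (w : seq Sigma) : Prop :=
  exists2 q, runs (@ginit _ _ A) e w q e & @gacc _ _ A q.
End Runs.

Definition is_BS12_aut (Sigma : finType) (A : GAut (int * rat) Sigma) : Prop :=
  forall q s p, List.In p (@gdelta _ _ A q s) -> in_BS12 p.2.

Definition BS12_lang (Sigma : finType) (A : GAut (int * rat) Sigma)
  : seq Sigma -> Prop := gaccepts aff_mul aff_one A.

Record CFG (Sigma : finType) := {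
  nonterm : finType;
  start : nonterm;
  rules : seq (nonterm * seq (nonterm + Sigma))
}.

Section CFGsem.
Variables (Sigma : finType) (g : CFG Sigma).

Inductive derive1 : seq (nonterm g + Sigma) -> seq (nonterm g + Sigma) -> Prop :=
| derive1_rule u v X rhs :
    List.In (X, rhs) (rules g) -> derive1 (u ++ inl X :: v) (u ++ rhs ++ v).

Inductive derives : seq (nonterm g + Sigma) -> seq (nonterm g + Sigma) -> Prop :=
| derives_refl s : derives s s
| derives_step s t u : derive1 s t -> derives t u -> derives s u.

Definition cfg_lang (w : seq Sigma) : Prop :=
  derives [:: inl (start g)] (map inr w).
End CFGsem.

Definition context_free (Sigma : finType) (L : seq Sigma -> Prop) : Prop :=
  exists g : CFG Sigma, forall w, L w <-> cfg_lang g w.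

(** The automaton multiplies its register by [b^-1] a guessed number [j] of
    times, by [a] once per letter, and then by [b] and [a^-1]; in the affine
    model the register returns to the identity exactly when the word has
    length [2^j].  On the grammar side, a derivation tree in which no
    nonterminal repeats along a path has yield bounded in terms of the
    grammar, so a long enough word has a tree with a repetition
    [Y =>* u Y v]; a repetition with [|uv| = 0] can be cut out without
    changing the yield.  Hence a context-free language with words of
    unbounded length contains words of all lengths [d + k c + l] for some
    [c > 0], whereas the powers of two contain no infinite arithmetic
    progression. *)

From HB Require Import structures.
From mathcomp Require Import all_boot all_order all_algebra ring zify.
Set Implicit Arguments.
Unset Strict Implicit.
Unset Printing Implicit Defensive.
Import GRing.Theory Num.Theory.

Section LengthDerivations.
Variables (Sigma : finType) (g : CFG Sigma).
Local Notation N := (nonterm g).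
Local Notation symbol := (N + Sigma)%type.
Local Notation derive1 := (@derive1 Sigma g).
Local Notation derives := (@derives Sigma g).

(* Derivation trees, abstracted to the length of their yield. *)
Inductive gen : N -> nat -> Prop :=
| gen_rule X rhs n : List.In (X, rhs) (rules g) -> gens rhs n -> gen X n
with gens : seq symbol -> nat -> Prop :=
| gens_nil : gens [::] 0
| gens_term a s n : gens s n -> gens (inr a :: s) n.+1
| gens_nonterm Y s m n : gen Y m -> gens s n -> gens (inl Y :: s) (m + n).

Scheme gen_min := Minimality for gen Sort Prop
with gens_min := Minimality for gens Sort Prop.
Combined Scheme gen_gens_ind from gen_min, gens_min.

Lemma gens_cat s t m n : gens s m -> gens t n -> gens (s ++ t) (m + n).
Proof.
elim=> //= [a s' m' _ IH | Y s' k m' HY _ IH] Ht.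
  by rewrite addSn; apply/gens_term/IH.
by rewrite -addnA; apply/gens_nonterm/IH.
Qed.

Lemma gens_cat_inv s t n :
  gens (s ++ t) n -> exists m1 m2, [/\ n = m1 + m2, gens s m1 & gens t m2].
Proof.
elim: s n => [|x s IH] n /= H; first by exists 0, n; split=> //; apply: gens_nil.
inversion H as [|a s' n' Hs| Y s' m n' HY Hs]; subst.
  have [m1 [m2 [-> H1 H2]]] := IH _ Hs.
  by exists m1.+1, m2; split=> //; apply: gens_term.
have [m1 [m2 [-> H1 H2]]] := IH _ Hs.
by exists (m + m1), m2; split; [rewrite addnA | apply: gens_nonterm |].
Qed.

Lemma gens_single X n : gens [:: inl X] n -> gen X n.
Proof.
move=> H; inversion H as [| |Y s m n' HY Hs]; inversion Hs.
by rewrite addn0.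
Qed.

Lemma gens_map w : gens (map inr w) (size w).
Proof. by elim: w => [|a w IH]; [apply: gens_nil | apply: gens_term]. Qed.

Lemma derive1_gens s t n : derive1 s t -> gens t n -> gens s n.
Proof.
case=> u v X rhs Hrule /gens_cat_inv[a [bc [-> Hu /gens_cat_inv[b [c [-> Hrhs Hv]]]]]].
exact/gens_cat/gens_nonterm/Hv/gen_rule/Hrhs.
Qed.

Lemma derives_gens s w : derives s (map inr w) -> gens s (size w).
Proof.
move Et: (map inr w) => t H; elim: H Et => [_ <- | s' t' u H1 _ IH Et].
  exact: gens_map.
exact: derive1_gens H1 (IH Et).
Qed.

Lemma derives_trans s t u : derives s t -> derives t u -> derives s u.
Proof. by elim=> // s' t' v H1 _ IH Hu; apply: derives_step H1 (IH Hu). Qed.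

Lemma derives_frame u v s t :
  derives s t -> derives (u ++ s ++ v) (u ++ t ++ v).
Proof.
elim=> [s'|s' t' w [u0 v0 X rhs Hrule] _ IH]; first exact: derives_refl.
apply: derives_step IH.
by have := derive1_rule (u ++ u0) (v0 ++ v) Hrule; rewrite -!catA.
Qed.

Lemma derives_cat s1 t1 s2 t2 :
  derives s1 t1 -> derives s2 t2 -> derives (s1 ++ s2) (t1 ++ t2).
Proof.
move=> /(derives_frame [::] s2) H1 /(derives_frame t1 [::]) H2.
by rewrite !cats0 in H2; apply: derives_trans H1 H2.
Qed.

Lemma gen_derives :
  (forall X n, gen X n -> exists2 w, size w = n & derives [:: inl X] (map inr w)) /\
  (forall s n, gens s n -> exists2 w, size w = n & derives s (map inr w)).
Proof.
apply: gen_gens_ind.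
- move=> X rhs n Hrule _ [w Hw Hd]; exists w => //.
  by apply: derives_step Hd; have := derive1_rule [::] [::] Hrule; rewrite cats0.
- by exists [::]; last exact: derives_refl.
- move=> a s n _ [w <- Hd]; exists (a :: w) => //.
  exact: (derives_cat (derives_refl [:: inr a]) Hd).
- move=> Y s m n _ [w1 <- Hd1] _ [w2 <- Hd2]; exists (w1 ++ w2).
    by rewrite size_cat.
  by rewrite map_cat; exact: (derives_cat Hd1 Hd2).
Qed.

Lemma cfg_lang_gen w : cfg_lang g w -> gen (start g) (size w).
Proof. by move/derives_gens/gens_single. Qed.

Lemma gen_cfg_lang n : gen (start g) n -> exists2 w, size w = n & cfg_lang g w.
Proof. exact: gen_derives.1. Qed.

(* [gen_ctx X Y c]: a derivation tree from [X] with one leaf [Y] left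
   unexpanded, the other leaves yielding [c] terminals. *)
Inductive gen_ctx : N -> N -> nat -> Prop :=
| gen_ctx_refl X : gen_ctx X X 0
| gen_ctx_rule X rhs Y c :
    List.In (X, rhs) (rules g) -> gens_ctx rhs Y c -> gen_ctx X Y c
with gens_ctx : seq symbol -> N -> nat -> Prop :=
| gens_ctx_here Z s Y c n :
    gen_ctx Z Y c -> gens s n -> gens_ctx (inl Z :: s) Y (c + n)
| gens_ctx_term a s Y c : gens_ctx s Y c -> gens_ctx (inr a :: s) Y c.+1
| gens_ctx_nonterm Z s Y m c :
    gen Z m -> gens_ctx s Y c -> gens_ctx (inl Z :: s) Y (m + c).

Scheme gen_ctx_min := Minimality for gen_ctx Sort Prop
with gens_ctx_min := Minimality for gens_ctx Sort Prop.
Combined Scheme gen_ctx_gens_ctx_ind from gen_ctx_min, gens_ctx_min.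

Lemma gen_ctx_gen :
  (forall X Y c, gen_ctx X Y c -> forall m, gen Y m -> gen X (c + m)) /\
  (forall s Y c, gens_ctx s Y c -> forall m, gen Y m -> gens s (c + m)).
Proof.
apply: gen_ctx_gens_ctx_ind => [//|X rhs Y c Hrule _ IH m HY|||].
- exact/gen_rule/IH.
- move=> Z s Y c n _ IH Hs m HY; rewrite addnAC.
  exact/gens_nonterm/Hs/IH.
- by move=> a s Y c _ IH m HY; apply/gens_term/IH.
- by move=> Z s Y m' c HZ _ IH m HY; rewrite -addnA; apply/gens_nonterm/IH.
Qed.

Lemma gen_ctx_trans :
  (forall X Y c, gen_ctx X Y c -> forall Z d, gen_ctx Y Z d -> gen_ctx X Z (c + d)) /\
  (forall s Y c, gens_ctx s Y c -> forall Z d, gen_ctx Y Z d -> gens_ctx s Z (c + d)).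
Proof.
apply: gen_ctx_gens_ctx_ind => [//|X rhs Y c Hrule _ IH Z d HY|||].
- exact/gen_ctx_rule/IH.
- move=> Z s Y c n _ IH Hs Z' d HY; rewrite addnAC.
  exact/gens_ctx_here/Hs/IH.
- by move=> a s Y c _ IH Z d HY; apply/gens_ctx_term/IH.
- by move=> Z s Y m c HZ _ IH Z' d HY; rewrite -addnA; apply/gens_ctx_nonterm/IH.
Qed.

Lemma gen_ctx_iter X c k : gen_ctx X X c -> gen_ctx X X (k * c).
Proof.
move=> HX; elim: k => [|k IH]; first exact: gen_ctx_refl.
by rewrite mulSn; apply: gen_ctx_trans.1 HX _ _ IH.
Qed.

Definition pumpable (C : N -> nat -> Prop) : Prop :=
  exists Y d c l, [/\ 0 < c, C Y d, gen_ctx Y Y c & gen Y l].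

Lemma pumpable_mono (C C' : N -> nat -> Prop) :
  (forall Y d, C Y d -> exists d', C' Y d') -> pumpable C -> pumpable C'.
Proof.
move=> CC' [Y [d [c [l [c_gt0 /CC'[d' HC'] HY Hl]]]]].
by exists Y, d', c, l.
Qed.

Lemma pumpable_gen X : pumpable (gen_ctx X) ->
  exists d c l, 0 < c /\ forall k, gen X (d + k * c + l).
Proof.
move=> [Y [d [c [l [c_gt0 HXY HY Hl]]]]]; exists d, c, l; split=> // k.
rewrite -addnA; apply: gen_ctx_gen.1 HXY _ _.
exact: gen_ctx_gen.1 (gen_ctx_iter k HY) _ Hl.
Qed.

(* Derivation trees in which no nonterminal occurs in [V] or below an
   occurrence of itself. *)
Inductive sgen : {set N} -> N -> nat -> Prop :=
| sgen_rule (V : {set N}) X rhs n : X \notin V -> List.In (X, rhs) (rules g) ->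
    sgens (X |: V) rhs n -> sgen V X n
with sgens : {set N} -> seq symbol -> nat -> Prop :=
| sgens_nil (V : {set N}) : sgens V [::] 0
| sgens_term V a s n : sgens V s n -> sgens V (inr a :: s) n.+1
| sgens_nonterm V Y s m n :
    sgen V Y m -> sgens V s n -> sgens V (inl Y :: s) (m + n).

Scheme sgen_min := Minimality for sgen Sort Prop
with sgens_min := Minimality for sgens Sort Prop.
Combined Scheme sgen_sgens_ind from sgen_min, sgens_min.

Lemma sgen_gen :
  (forall V X n, sgen V X n -> gen X n) /\ (forall V s n, sgens V s n -> gens s n).
Proof.
apply: sgen_sgens_ind => [V X rhs n _ Hrule _ Hrhs|V|V a s n _ Hs|V Y s m n _ HY _ Hs].
- exact: gen_rule Hrule Hrhs.
- exact: gens_nil.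
- exact: gens_term Hs.
- exact: gens_nonterm HY Hs.
Qed.

Lemma sgen_subset :
  (forall V X n, sgen V X n -> forall V' : {set N}, V' \subset V -> sgen V' X n) /\
  (forall V s n, sgens V s n -> forall V' : {set N}, V' \subset V -> sgens V' s n).
Proof.
apply: sgen_sgens_ind.
- move=> V X rhs n XV Hrule _ IH V' sV'V; apply: sgen_rule Hrule _.
    by apply: contra XV; apply: (subsetP sV'V).
  exact/IH/setUS.
- by move=> V V' _; apply: sgens_nil.
- by move=> V a s n _ IH V' sV'V; apply/sgens_term/IH.
- by move=> V Y s m n _ IHY _ IHs V' sV'V; apply: sgens_nonterm; [apply: IHY | apply: IHs].
Qed.

Lemma sgen_occurrence X0 :
  (forall V X n, sgen V X n -> sgen (X0 |: V) X n \/
     exists c m, [/\ gen_ctx X X0 c, sgen set0 X0 m & n = c + m]) /\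
  (forall V s n, sgens V s n -> sgens (X0 |: V) s n \/
     exists c m, [/\ gens_ctx s X0 c, sgen set0 X0 m & n = c + m]).
Proof.
apply: sgen_sgens_ind.
- move=> V X rhs n XV Hrule Hrhs IH.
  have [->|XX0] := eqVneq X0 X.
    right; exists 0, n; split=> //; first exact: gen_ctx_refl.
    exact: sgen_subset.1 _ _ _ (sgen_rule XV Hrule Hrhs) _ (sub0set _).
  case: IH => [Hrhs'|[c [m [Hc Hm ->]]]].
    left; apply: sgen_rule Hrule _; first by rewrite in_setU1 eq_sym negb_or XX0.
    by rewrite setUCA.
  by right; exists c, m; split=> //; apply: gen_ctx_rule Hrule Hc.
- by move=> V; left; apply: sgens_nil.
- move=> V a s n _ [Hs|[c [m [Hc Hm ->]]]]; first by left; apply: sgens_term.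
  by right; exists c.+1, m; split=> //; apply: gens_ctx_term.
- move=> V Y s m n HY [HY'|[c [m' [Hc Hm' ->]]]] Hs IHs; last first.
    right; exists (c + n), m'; split=> //; last by rewrite addnAC.
    exact/gens_ctx_here/(sgen_gen.2 _ _ _ Hs).
  case: IHs => [Hs'|[c [m' [Hc Hm' ->]]]]; first by left; apply: sgens_nonterm.
  right; exists (m + c), m'; split=> //; last by rewrite addnA.
  exact/gens_ctx_nonterm/Hc/(sgen_gen.1 _ _ _ HY).
Qed.

(* A repetition [X =>* u X v] with [|uv| = 0] is removed by replacing the
   tree of [X] with that of its inner occurrence, which has the same yield. *)
Lemma gen_sgen_or_pumpable :
  (forall X n, gen X n -> sgen set0 X n \/ pumpable (gen_ctx X)) /\
  (forall s n, gens s n -> sgens set0 s n \/ pumpable (gens_ctx s)).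
Proof.
apply: gen_gens_ind.
- move=> X rhs n Hrule _ [Hrhs|Prhs]; last first.
    by right; apply: pumpable_mono Prhs => Y d Hd; exists d; apply: gen_ctx_rule Hrule Hd.
  have [Hrhs'|[c [m [Hc Hm En]]]] := (sgen_occurrence X).2 _ _ _ Hrhs.
    by left; apply: sgen_rule Hrule Hrhs'; rewrite in_set0.
  have [c0|c_gt0] := posnP c; first by left; rewrite En c0.
  right; exists X, 0, c, m; split=> //; first exact: gen_ctx_refl.
    exact: gen_ctx_rule Hrule Hc.
  exact: sgen_gen.1 Hm.
- by left; apply: sgens_nil.
- move=> a s n _ [Hs|Ps]; first by left; apply: sgens_term.
  by right; apply: pumpable_mono Ps => Y d Hd; exists d.+1; apply: gens_ctx_term.
- move=> Y s m n HY [HY'|PY] Hs IHs.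
    case: IHs => [Hs'|Ps]; first by left; apply: sgens_nonterm.
    by right; apply: pumpable_mono Ps => Z d Hd; exists (m + d); apply: gens_ctx_nonterm.
  by right; apply: pumpable_mono PY => Z d Hd; exists (d + n); apply: gens_ctx_here.
Qed.

Definition rhs_bound : nat := \max_(p <- rules g) size p.2.

Lemma size_rhs_le X rhs : List.In (X, rhs) (rules g) -> size rhs <= rhs_bound.
Proof.
rewrite /rhs_bound; elim: (rules g) => [|p ps IH] //= [->|/IH]; rewrite big_cons leq_max.
  by rewrite leqnn.
by move->; rewrite orbT.
Qed.

Lemma sgen_bound :
  (forall V X n, sgen V X n -> n <= rhs_bound.+1 ^ (#|N| - #|V|)) /\
  (forall V s n, sgens V s n -> n <= size s * rhs_bound.+1 ^ (#|N| - #|V|)).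
Proof.
apply: sgen_sgens_ind => [V X rhs n XV Hrule _|//|V a s n _|V Y s m n _ HY _].
- rewrite cardsU1 XV add1n => IH.
  have : #|V| < #|N| by have := max_card (X |: V); rewrite cardsU1 XV.
  move/subnSK <-; rewrite expnS; apply: leq_trans IH _.
  by rewrite leq_mul2r (leq_trans (size_rhs_le Hrule)) ?orbT.
- have := expn_gt0 rhs_bound.+1 (#|N| - #|V|); move: (_ ^ _) => K /=; nia.
- move: (_ ^ _) HY => K /=; nia.
Qed.

Theorem cfg_lang_pumping w : cfg_lang g w -> rhs_bound.+1 ^ #|N| < size w ->
  exists d c l, 0 < c /\ forall k, exists2 w', size w' = d + k * c + l & cfg_lang g w'.
Proof.
move=> /cfg_lang_gen Hw Hsize.
have [Hs|/pumpable_gen[d [c [l [c_gt0 Hk]]]]] := gen_sgen_or_pumpable.1 _ _ Hw.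
  by have := sgen_bound.1 _ _ _ Hs; rewrite cards0 subn0 leqNgt Hsize.
by exists d, c, l; split=> // k; apply: gen_cfg_lang.
Qed.

End LengthDerivations.

Lemma arith_progression_not_pow2 d c l :
  0 < c -> ~ (forall k, exists j, d + k * c + l = 2 ^ j).
Proof.
move=> c_gt0 Hk; have [i E2] := Hk 2; have [j E3] := Hk 3.
have : 2 ^ i < 2 ^ j < 2 ^ i.+1 by rewrite expnS -E2 -E3; apply/andP; split; lia.
by rewrite !ltn_exp2l //; lia.
Qed.

Lemma pow2_sizes_not_context_free (Sigma : finType) (L : seq Sigma -> Prop) :
  (forall n, exists2 w, L w & n < size w) ->
  (forall w, L w -> exists j, size w = 2 ^ j) -> ~ context_free L.
Proof.
move=> Lunbounded Lpow2 [g Lg].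
have [w /Lg Lw Hsize] := Lunbounded ((rhs_bound g).+1 ^ #|nonterm g|).
have [d [c [l [c_gt0 Hpump]]]] := cfg_lang_pumping Lw Hsize.
apply: (arith_progression_not_pow2 (d := d) (l := l) c_gt0) => k.
by have [w' <- /Lg/Lpow2] := Hpump k.
Qed.

Inductive pow2_state := Guess | Read | Check | Done.

Definition pow2_state_code (q : pow2_state) : 'I_4 :=
  inord match q with Guess => 0 | Read => 1 | Check => 2 | Done => 3 end.

Definition pow2_state_decode (i : 'I_4) : pow2_state :=
  match nat_of_ord i with 0 => Guess | 1 => Read | 2 => Check | _ => Done end.

Lemma pow2_state_codeK : cancel pow2_state_code pow2_state_decode.
Proof. by case; rewrite /pow2_state_decode /pow2_state_code inordK. Qed.

HB.instance Definition _ := Finite.copy pow2_state (can_type pow2_state_codeK).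

Section Pow2Automaton.
Local Open Scope ring_scope.

(* A register [(k, r)] is the map [t |-> 2^k t + r].  After [j] steps in
   [Guess] and [n] letters in [Read] it holds [(-j, n 2^-j)]; [Check] then
   reaches [(0, 0)] iff [n 2^-j = 1]. *)
Definition pow2_delta (q : pow2_state) (s : option unit) :
    seq (pow2_state * (int * rat)) :=
  match q, s with
  | Guess, None => [:: (Guess, (-1, 0)); (Read, aff_one)]
  | Read, Some _ => [:: (Read, BS_a)]
  | Read, None => [:: (Check, aff_one)]
  | Check, None => [:: (Check, BS_b); (Done, (0, -1))]
  | _, _ => [::]
  end.

Definition pow2_aut : GAut (int * rat) unit :=
  {| gstate := pow2_state; ginit := Guess; gacc := pred1 Done; gdelta := pow2_delta |}.

Lemma dyadic_int (n : int) : dyadic n%:~R.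
Proof. by exists n, 0%N; rewrite expr0 divr1. Qed.

Lemma pow2_aut_BS12 : is_BS12_aut pow2_aut.
Proof.
move=> q s [q' [k r]]; rewrite /in_BS12 /=.
case: q; case: s => [[]|] //=; do ![case=> [[_ _ <-]|]] => //.
all: first [exact: (dyadic_int 0) | exact: (dyadic_int 1) | exact: (dyadic_int (-1))].
Qed.

Local Notation runs := (runs aff_mul (A := pow2_aut)).

Definition accept_inv (q : pow2_state) (x : int * rat) (w : seq unit) : Prop :=
  match q with
  | Guess => exists j : nat, x.2 + (size w)%:R * 2%:R ^ (x.1 - j%:Z) = 1
  | Read => x.2 + (size w)%:R * 2%:R ^ x.1 = 1
  | Check => w = [::] /\ x.2 = 1
  | Done => w = [::] /\ x = aff_one
  end.

Lemma runs_accepting_inv q x w q' y :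
  runs q x w q' y -> q' = Done -> y = aff_one -> accept_inv q x w.
Proof.
elim=> {q x w q' y} [q x -> -> //|q x w q1 m q' y Hin _ IH Eq' Ey
                            |q x a w q1 m q' y Hin _ IH Eq' Ey];
  move: Hin; case: q => //=; do ![case=> [[? ?]|]] => //;
  move: {IH}(IH Eq' Ey); subst; rewrite /aff_mul /= ?mulr0 ?addr0.
- by move=> [j Hj]; exists j.+1; apply: etrans Hj; congr (_ + _ * _ ^ _); lia.
- by move=> Hw; exists 0%N; rewrite subr0.
- by move=> [-> ->]; rewrite mul0r addr0.
- exact: id.
- by move=> [-> [-> /eqP]]; rewrite expr0z mulrN1 subr_eq0 => /eqP.
- by move=> Hw; apply: etrans Hw; rewrite -addn1 natrD; ring.
Qed.

Lemma pow2_aut_lang_size w : BS12_lang pow2_aut w -> exists j, size w = (2 ^ j)%N.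
Proof.
case=> q Hrun /eqP Hq; have [j] := runs_accepting_inv Hrun Hq erefl.
rewrite /= add0r sub0r -exprnN => /divr1_eq Hw.
by exists j; apply/eqP; rewrite -(eqr_nat rat) natrX Hw.
Qed.

Lemma runs_eps_to q x w q1 m q' y x' :
  List.In (q1, m) (pow2_delta q None) -> aff_mul x m = x' ->
  runs q1 x' w q' y -> runs q x w q' y.
Proof. by move=> Hin <-; apply: runs_eps. Qed.

Lemma runs_sym_to q x a w q1 m q' y x' :
  List.In (q1, m) (pow2_delta q (Some a)) -> aff_mul x m = x' ->
  runs q1 x' w q' y -> runs q x (a :: w) q' y.
Proof. by move=> Hin <-; apply: runs_sym. Qed.

Lemma runs_Check (j : nat) : runs Check (- j%:Z, 1) [::] Done aff_one.
Proof.
elim: j => [|j IH].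
  apply: (runs_eps_to (q1 := Done) (m := (0, -1)) (x' := aff_one)) (runs_nil _ _ _).
    by right; left.
  by rewrite /aff_mul /= oppr0 addr0 expr0z mulrN1 addrN.
apply: (runs_eps_to (q1 := Check) (m := BS_b) (x' := (- j%:Z, 1))) IH; first by left.
by rewrite /aff_mul /= mulr0 addr0; congr pair; lia.
Qed.

Lemma runs_Read (j m : nat) (r : rat) : r + m%:R * 2%:R ^ (- j%:Z) = 1 ->
  runs Read (- j%:Z, r) (nseq m tt) Done aff_one.
Proof.
elim: m r => [|m IH] r Hr.
  apply: (runs_eps_to (q1 := Check) (m := aff_one) (x' := (- j%:Z, 1))) (runs_Check j).
    by left.
  by rewrite /aff_mul /= mulr0 !addr0 -Hr mul0r addr0.
apply: (runs_sym_to (q1 := Read) (m := BS_a) (x' := (- j%:Z, r + 2%:R ^ (- j%:Z)))).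
- by left.
- by rewrite /aff_mul /= addr0 mulr1.
- by apply: IH; apply: etrans Hr; rewrite -addn1 natrD; ring.
Qed.

Lemma runs_Guess (i d : nat) :
  runs Guess (- i%:Z, 0) (nseq (2 ^ (i + d)) tt) Done aff_one.
Proof.
elim: d i => [|d IH] i.
  apply: (runs_eps_to (q1 := Read) (m := aff_one) (x' := (- i%:Z, 0))).
  - by right; left.
  - by rewrite /aff_mul /= mulr0 !addr0.
  - by apply: runs_Read; rewrite add0r addn0 natrX -exprnN mulfV // expf_neq0.
apply: (runs_eps_to (q1 := Guess) (m := (-1, 0)) (x' := (- i.+1%:Z, 0))).
- by left.
- by rewrite /aff_mul /= mulr0 addr0; congr pair; lia.
- by rewrite -addSnnS; apply: IH.
Qed.

Lemma pow2_aut_lang_nseq n : BS12_lang pow2_aut (nseq (2 ^ n) tt).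
Proof. by exists Done; [have := runs_Guess 0 n; rewrite oppr0 | exact: eqxx]. Qed.

End Pow2Automaton.

Theorem theorem3p13 :
  exists (Sigma : finType) (A : GAut (int * rat) Sigma),
    is_BS12_aut A /\ ~ context_free (BS12_lang A).
Proof.
exists unit, pow2_aut; split; first exact: pow2_aut_BS12.
apply: pow2_sizes_not_context_free => [n|w /pow2_aut_lang_size //].
by exists (nseq (2 ^ n) tt); [exact: pow2_aut_lang_nseq | rewrite size_nseq ltn_expl].
Qed.
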